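(* Let $\mathfrak{C}=(U,M,I,N,J)$ be a formal decision context. Then the set of necessary II-decision rules of $\mathfrak{C}$ is $$\overline{\mathfrak{R}}_{II}(\mathfrak{C})=\{(O^{\square_M\lozenge_M},O^{\square_M})\rightarrow(\cap[O]_{S_2},(\cap[O]_{S_2})^{\lozenge_N})\mid O\in\mathrm{Ext}L_P(\mathfrak{C}_N)\}.$$
   Context: Formal context $(U,M,I)$: $U$ and $M$ are finite nonempty sets and $I\subseteq U\times M$. For $O\subseteq U$ and $C\subseteq M$ define: - $O^{\lozenge}=\{a\in M\mid\exists x\in O\,((x,a)\in I)\}$ and $C^{\square}=\{x\in U\mid \forall a\in M\,((x,a)\in I\Rightarrow a\in C)\}$; - $O^{\square}=\{a\in M\mid \forall x\in U\,((x,a)\in I\Rightarrow x\in O)\}$ and $C^{\lozenge}=\{x\in U\mid \exists a\in C\,((x,a)\in I)\}$. An object-oriented concept is a pair $(O,C)$ with $O^\square=C$ and $C^\lozenge=O$ (set $L_O$). A property-oriented concept is a pair $(O,C)$ with $O^\lozenge=C$ and $C^\square=O$ (set $L_P$). $\mathrm{Ext}$ denotes the set of extents. Standing assumption: contexts are canonical, i.e. every object has at least one attribute and not all attributes, and every attribute is possessed by at least one object and not by all objects. A formal decision context $\mathfrak{C}=(U,M,I,N,J)$ has conditional context $\mathfrak{C}_M=(U,M,I)$ and decision context $\mathfrak{C}_N=(U,N,J)$, with $M\cap N=\emptyset$. Subscripts $M$ and $N$ indicate the context in which an operator is computed. A II-decision rule is $(O,C)\rightarrow(Y,D)$ with $(O,C)\in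 L_O(\mathfrak{C}_M)$, $(Y,D)\in L_P(\mathfrak{C}_N)$ and $O\subseteq Y$; the set of these is $\mathfrak{R}_{II}(\mathfrak{C})$. Implication: $(O_1,C_1)\rightarrow(Y_1,D_1)\Rightarrow(O_2,C_2)\rightarrow(Y_2,D_2)$ iff $O_2\subseteq O_1\subseteq Y_1\subseteq Y_2$. A rule $r$ is necessary if there is no $r_1\in\mathfrak{R}_{II}(\mathfrak{C})\setminus\{r\}$ with $r_1\Rightarrow r$. $S_2$ is the equivalence relation on $\mathrm{Ext}L_P(\mathfrak{C}_N)$ given by $(O,Y)\in S_2$ iff $O^{\square_M}=Y^{\square_M}$. $[O]_{S_2}$ is the class of $O$, and $\cap[O]_{S_2}$ is the intersection of its members. *)

From mathcomp Require Import all_boot.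
Set Implicit Arguments. Unset Strict Implicit. Unset Printing Implicit Defensive.

Section Context.
Variables (U M : finType) (I : U -> M -> bool).

Definition diaO (O : {set U}) : {set M} := [set a | [exists x in O, I x a]].
Definition boxC (C : {set M}) : {set U} := [set x | [forall a, I x a ==> (a \in C)]].
Definition boxO (O : {set U}) : {set M} := [set a | [forall x, I x a ==> (x \in O)]].
Definition diaC (C : {set M}) : {set U} := [set x | [exists a in C, I x a]].

Definition is_LO (O : {set U}) (C : {set M}) : Prop := boxO O = C /\ diaC C = O.
Definition is_LP (O : {set U}) (C : {set M}) : Prop := diaO O = C /\ boxC C = O.
Definition ExtLP (O : {set U}) : Prop := exists C, is_LP O C.
Definition ExtLPb (O : {set U}) : bool :=
  [exists C : {set M}, (diaO O == C) && (boxC C == O)].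

Definition canonical_context : Prop :=
  (forall x : U, (exists a, I x a) /\ (exists a, ~~ I x a)) /\
  (forall a : M, (exists x, I x a) /\ (exists x, ~~ I x a)).
End Context.

Section Decision.
Variables (U M N : finType) (I : U -> M -> bool) (J : U -> N -> bool).

(* a II-decision rule (O,C) -> (Y,D) is encoded as ((O,C),(Y,D)) *)
Definition rule : Type := prod (prod {set U} {set M}) (prod {set U} {set N}).

Definition is_rule_II (r : rule) : Prop :=
  is_LO I r.1.1 r.1.2 /\ is_LP J r.2.1 r.2.2 /\ r.1.1 \subset r.2.1.

Definition rule_implies (r1 r2 : rule) : Prop :=
  r2.1.1 \subset r1.1.1 /\ r1.1.1 \subset r1.2.1 /\ r1.2.1 \subset r2.2.1.

Definition necessary_II (r : rule) : Prop :=
  is_rule_II r /\ ~ (exists r1, is_rule_II r1 /\ r1 <> r /\ rule_implies r1 r).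

Definition S2_class (O Y : {set U}) : bool := ExtLPb J Y && (boxO I Y == boxO I O).

Definition cap_class (O : {set U}) : {set U} :=
  \bigcap_(Y : {set U} | S2_class O Y) Y.
End Decision.

(** The four derivation operators form two Galois connections, so
    [O |-> O^□◇] is an interior operator whose fixed points are the extents of
    [L_O(C_M)] and [Y |-> Y^◇□] is a closure operator whose fixed points are the
    extents of [L_P(C_N)].  A II-rule is thus determined by a pair [O ⊆ Y] of
    such fixed points, and it is necessary exactly when neither end can be moved:
    [O = Y^□◇] and [Y = O^◇□].  For an extent [O] of [L_P(C_N)], every member of
    [[O]_{S_2}] lies between [O^□◇] and [O], and [O^□◇◇□] is the least one, so
    [∩[O]_{S_2} = O^□◇◇□]. *)
From mathcomp Require Import all_boot.
Set Implicit Arguments. Unset Strict Implicit. Unset Printing Implicit Defensive.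

Section GaloisOperators.
Variables (U M : finType) (I : U -> M -> bool).

Definition lo_interior (O : {set U}) : {set U} := diaC I (boxO I O).
Definition lp_closure (O : {set U}) : {set U} := boxC I (diaO I O).

Lemma boxOS (A B : {set U}) : A \subset B -> boxO I A \subset boxO I B.
Proof.
move=> /subsetP AB; apply/subsetP=> a; rewrite !inE => /forallP Ha.
by apply/forallP=> x; apply/implyP=> Ixa; apply/AB/(implyP (Ha x)).
Qed.

Lemma boxCS (A B : {set M}) : A \subset B -> boxC I A \subset boxC I B.
Proof.
move=> /subsetP AB; apply/subsetP=> x; rewrite !inE => /forallP Hx.
by apply/forallP=> a; apply/implyP=> Ixa; apply/AB/(implyP (Hx a)).
Qed.

Lemma diaCS (A B : {set M}) : A \subset B -> diaC I A \subset diaC I B.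
Proof.
move=> /subsetP AB; apply/subsetP=> x; rewrite !inE => /existsP [a /andP [Aa Ixa]].
by apply/existsP; exists a; rewrite Ixa AB.
Qed.

Lemma diaOS (A B : {set U}) : A \subset B -> diaO I A \subset diaO I B.
Proof.
move=> /subsetP AB; apply/subsetP=> a; rewrite !inE => /existsP [x /andP [Ax Ixa]].
by apply/existsP; exists x; rewrite Ixa AB.
Qed.

Lemma lo_interior_sub (O : {set U}) : lo_interior O \subset O.
Proof.
apply/subsetP=> x; rewrite !inE => /existsP [a /andP [+ Ixa]].
by rewrite inE => /forallP /(_ x) /implyP; apply.
Qed.

Lemma boxO_lo_interior (O : {set U}) : boxO I (lo_interior O) = boxO I O.
Proof.
apply/eqP; rewrite eqEsubset boxOS ?lo_interior_sub //=.
apply/subsetP=> a Oa; rewrite inE; apply/forallP=> x; apply/implyP=> Ixa.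
by rewrite inE; apply/existsP; exists a; rewrite Oa Ixa.
Qed.

Lemma lo_interiorS (A B : {set U}) : A \subset B -> lo_interior A \subset lo_interior B.
Proof. by move=> AB; rewrite diaCS ?boxOS. Qed.

Lemma lo_interior_id (O : {set U}) : lo_interior (lo_interior O) = lo_interior O.
Proof. by rewrite [LHS]/lo_interior boxO_lo_interior. Qed.

Lemma sub_lp_closure (O : {set U}) : O \subset lp_closure O.
Proof.
apply/subsetP=> x Ox; rewrite inE; apply/forallP=> a; apply/implyP=> Ixa.
by rewrite inE; apply/existsP; exists x; rewrite Ox Ixa.
Qed.

Lemma diaO_lp_closure (O : {set U}) : diaO I (lp_closure O) = diaO I O.
Proof.
apply/eqP; rewrite eqEsubset (diaOS (sub_lp_closure O)) andbT.
apply/subsetP=> a; rewrite inE => /existsP [x /andP [+ Ixa]].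
by rewrite inE => /forallP /(_ a) /implyP; apply.
Qed.

Lemma lp_closureS (A B : {set U}) : A \subset B -> lp_closure A \subset lp_closure B.
Proof. by move=> AB; rewrite boxCS ?diaOS. Qed.

Lemma lp_closure_id (O : {set U}) : lp_closure (lp_closure O) = lp_closure O.
Proof. by rewrite [LHS]/lp_closure diaO_lp_closure. Qed.

Lemma ExtLPE (O : {set U}) : ExtLP I O <-> lp_closure O = O.
Proof. by split=> [[C [<- clO]] // | clO]; exists (diaO I O). Qed.

Lemma ExtLPbE (O : {set U}) : ExtLPb I O = (lp_closure O == O).
Proof.
apply/existsP/eqP=> [[C /andP [/eqP <- /eqP //]] | clO].
by exists (diaO I O); rewrite eqxx; apply/eqP.
Qed.

Lemma boxO_between (O Y : {set U}) :
  lo_interior O \subset Y -> Y \subset O -> boxO I Y = boxO I O.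
Proof.
move=> iOY YO; apply/eqP; rewrite eqEsubset boxOS //=.
by rewrite -[boxO I O]boxO_lo_interior boxOS.
Qed.

End GaloisOperators.

Section DecisionRules.
Variables (U M N : finType) (I : U -> M -> bool) (J : U -> N -> bool).

Definition II_rule (O Y : {set U}) : rule U M N := ((O, boxO I O), (Y, diaO J Y)).

Lemma is_rule_IIE (r : rule U M N) :
  is_rule_II I J r <-> exists O Y,
    [/\ r = II_rule O Y, lo_interior I O = O, lp_closure J Y = Y & O \subset Y].
Proof.
split=> [|[O [Y [-> iO clY OY]]]]; last by do !split.
by case: r => [[O C] [Y D]] [[/= <- iO] [[/= <- clY] /= OY]]; exists O, Y.
Qed.

Lemma necessary_II_ruleE (O Y : {set U}) : is_rule_II I J (II_rule O Y) ->
  necessary_II I J (II_rule O Y) <-> O = lo_interior I Y /\ Y = lp_closure J O.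
Proof.
move=> rOY; have /is_rule_IIE [O' [Y' [[<- _ <- _] iO clY OY]]] := rOY.
split=> [[_ unimplied] | [OiY YclO]].
  have minimal r1 : is_rule_II I J r1 -> rule_implies r1 (II_rule O Y) ->
      r1 = II_rule O Y.
    move=> r1R r1_imp; case: (eqVneq r1 (II_rule O Y)) => // /eqP ne.
    by case: unimplied; exists r1.
  split.
    suff [<-] : II_rule (lo_interior I Y) Y = II_rule O Y by [].
    apply: minimal.
      by apply/is_rule_IIE; exists (lo_interior I Y), Y;
        rewrite lo_interior_id lo_interior_sub.
    by rewrite /rule_implies /= -{1}iO lo_interiorS ?lo_interior_sub.
  suff [-> _] : II_rule O (lp_closure J O) = II_rule O Y by [].
  apply: minimal.
    by apply/is_rule_IIE; exists O, (lp_closure J O);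
      rewrite lp_closure_id sub_lp_closure.
  by rewrite /rule_implies /= -clY lp_closureS ?sub_lp_closure.
split=> // -[_ [/is_rule_IIE [O1 [Y1 [-> iO1 clY1 O1Y1]]] [ne [/= OO1 [_ Y1Y]]]]].
apply: ne; congr II_rule; apply/eqP.
  by rewrite eqEsubset OO1 andbT -iO1 OiY lo_interiorS // (subset_trans O1Y1 Y1Y).
by rewrite eqEsubset Y1Y /= YclO -clY1 lp_closureS // (subset_trans OO1 O1Y1).
Qed.

Lemma cap_class_lp_closure (O : {set U}) :
  ExtLP J O -> cap_class I J O = lp_closure J (lo_interior I O).
Proof.
move=> /ExtLPE clO; apply/eqP; rewrite eqEsubset; apply/andP; split.
  apply: bigcap_inf; rewrite /S2_class ExtLPbE lp_closure_id eqxx /=.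
  apply/eqP/boxO_between; first exact: sub_lp_closure.
  by rewrite -{2}clO lp_closureS ?lo_interior_sub.
apply/bigcapsP=> Y; rewrite /S2_class ExtLPbE => /andP [/eqP clY /eqP bY].
have -> : lo_interior I O = lo_interior I Y by rewrite /lo_interior bY.
by rewrite -{2}clY lp_closureS ?lo_interior_sub.
Qed.

End DecisionRules.

Theorem theorem4p4 (U M N : finType) (I : U -> M -> bool) (J : U -> N -> bool) :
  (0 < #|U|)%N -> (0 < #|M|)%N -> (0 < #|N|)%N ->
  canonical_context I -> canonical_context J ->
  forall r : rule U M N,
    necessary_II I J r <->
    exists O : {set U}, ExtLP J O /\
      r = ((diaC I (boxO I O), boxO I O),
           (cap_class I J O, diaO J (cap_class I J O))).
Proof.
move=> _ _ _ _ _ r; split.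
  move=> nec; have /is_rule_IIE [O [Y [rE _ _ _]]] := nec.1; subst r.
  have [OiY YclO] := (necessary_II_ruleE nec.1).1 nec.
  have extY : ExtLP J Y by apply/ExtLPE; rewrite YclO lp_closure_id.
  exists Y; split=> //.
  by rewrite cap_class_lp_closure // -OiY -YclO /II_rule OiY boxO_lo_interior.
move=> [O [extO ->]]; rewrite cap_class_lp_closure //.
set Y := lp_closure J (lo_interior I O).
have iOY : lo_interior I O \subset Y by apply: sub_lp_closure.
have YO : Y \subset O.
  by have /ExtLPE clO := extO; rewrite -clO lp_closureS ?lo_interior_sub.
have -> : ((diaC I (boxO I O), boxO I O), (Y, diaO J Y)) =
          II_rule I J (lo_interior I O) Y.
  by rewrite /II_rule boxO_lo_interior.
have rR : is_rule_II I J (II_rule I J (lo_interior I O) Y).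
  by apply/is_rule_IIE; exists (lo_interior I O), Y;
    rewrite lo_interior_id lp_closure_id.
apply/(necessary_II_ruleE rR); split=> //.
by rewrite /lo_interior (boxO_between iOY YO).
Qed.
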